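(* Let $\{S_{a^{[k]}}\}_{k\in\mathbb{N}}$ be a $C^0$-convergent non-stationary binary subdivision scheme whose masks have support of fixed size smaller than $n$, and let $\bar p^0\in\mathbb{R}^{n\times m}$ be the matrix whose rows are $n$ initial control points in $\mathbb{R}^m$. Let $S^{[k]}_1,S^{[k]}_2$ be the $n\times n$ level-$k$ matrices described in the context, and define maps on row vectors $A\in\mathbb{R}^n$ by $f_{r,1}(A)=AS^{[1]}_r\bar p^0\in\mathbb{R}^m$ and, for $k>1$, $f_{r,k}(A)=AS^{[k]}_r\in\mathbb{R}^n$, $r=1,2$; let $\mathcal{F}_k(B)=f_{1,k}(B)\cup f_{2,k}(B)$. Then for every constant $C>0$ and every nonempty compact set $\mathbf{A}\subseteq K^{n-1}_C$, the sets $\mathcal{F}_1\circ\mathcal{F}_2\circ\cdots\circ\mathcal{F}_k(\mathbf{A})$ converge as $k\to\infty$ to the same set, namely the limit curve $p^\infty=\bigcup_{\eta\in\{1,2\}^{\mathbb{N}}}q_\eta\subseteq\mathbb{R}^m$ of the subdivision process started from $\bar p^0$.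
   Context: A non-stationary binary subdivision scheme with masks $a^{[k]}=\{a^{[k]}_j\}_{j\in\mathbb{Z}}$ (finitely supported real sequences) refines points by $p^{k+1}_i=\sum_j a^{[k]}_{i-2j}p^k_j$. For $n$ control points, $S^{[k]}_1$ and $S^{[k]}_2$ are the $n\times n$ submatrices of the level-$k$ refinement matrix such that, applied to a vector of $n$ consecutive points, $S^{[k]}_1$ produces the first $n$ and $S^{[k]}_2$ the last $n$ of the refined points; thus the level-$k$ points are $\bigcup_{i_1,\ldots,i_k\in\{1,2\}}\mathrm{rows}(S^{[k]}_{i_k}\cdots S^{[1]}_{i_1}\bar p^0)$. $C^0$-convergence of the scheme implies that for each $\eta=(i_1i_2\ldots)\in\{1,2\}^{\mathbb{N}}$ the matrices $S^{[k]}_{i_k}\cdots S^{[1]}_{i_1}\bar p^0$ converge to an $n\times m$ matrix all of whose rows equal a point $q_\eta\in\mathbb{R}^m$ (the limit point at parameter $\sum_k(i_k-1)2^{-k}$), and the limit curve is $\bigcup_\eta q_\eta$. $K^{n-1}_C=\{(x_1,\ldots,x_n)\in\mathbb{R}^n:\sum_i x_i=1,\ |x_i|\le C\}$. Convergence of sets is in the Hausdorff metric. *)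

From Stdlib Require Import Reals ZArith.
Open Scope R_scope.

(* Points of R^d are represented as functions nat -> R; only the
   coordinates 0..d-1 are ever used (values beyond are irrelevant).
   Matrices are functions nat -> nat -> R (row, column). *)

Fixpoint sumn (k : nat) (g : nat -> R) : R :=
  match k with O => 0 | S k' => sumn k' g + g k' end.

Definition dist (d : nat) (x y : nat -> R) : R :=
  sqrt (sumn d (fun c => (x c - y c) ^ 2)).

(* a k j = a^{[k]}_j.  Convention (WLOG up to re-indexing): every mask  *)
(* is supported in {0,...,L}.  Under this support hypothesis           *)
(* [refine] is exactly  p^{k+1}_i = sum_j a^{[k]}_{i-2j} p^k_j.        *)
Definition mask := nat -> Z -> R.

Definition refine (a : mask) (L : nat) (k : nat) (p : Z -> R) : Z -> R :=
  fun i => sumn (S L) (fun t =>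
    if Z.even (i - Z.of_nat t)
    then a k (Z.of_nat t) * p ((i - Z.of_nat t) / 2)%Z
    else 0).

Fixpoint level (a : mask) (L : nat) (p0 : Z -> R) (k : nat) : Z -> R :=
  match k with
  | O => p0
  | S k' => refine a L k' (level a L p0 k')
  end.

Definition bounded_data (p0 : Z -> R) : Prop :=
  exists B, forall i, Rabs (p0 i) <= B.

Definition limit_of (a : mask) (L : nat) (p0 : Z -> R) (f : R -> R) : Prop :=
  forall eps, 0 < eps -> exists N, forall k i, (N <= k)%nat ->
    Rabs (level a L p0 k i - f (IZR i / 2 ^ k)) < eps.

Definition C0_convergent (a : mask) (L : nat) : Prop :=
  (forall p0, bounded_data p0 ->
     exists f, continuity f /\ limit_of a L p0 f) /\
  (exists p0 f, bounded_data p0 /\ limit_of a L p0 f /\ exists t, f t <> 0).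

(* The n x n matrices S^{[k]}_1, S^{[k]}_2 (k >= 1, built from          *)
(* a^{[k-1]}).  For n consecutive points p_0..p_{n-1}, the refined      *)
(* points determined by them are those of index i = L-1, ..., 2n-1;     *)
(* S_1 gives the first n (i = L-1+r) and S_2 the last n (i = n+r).      *)
(* [b = false] encodes S_1, [b = true] encodes S_2.                     *)
Definition Smat (a : mask) (L n : nat) (k : nat) (b : bool) : nat -> nat -> R :=
  fun r j =>
    a (Nat.pred k)
      ((if b then Z.of_nat n else (Z.of_nat L - 1)%Z)
       + Z.of_nat r - 2 * Z.of_nat j)%Z.

Definition mmul (n : nat) (M P : nat -> nat -> R) : nat -> nat -> R :=
  fun r c => sumn n (fun j => M r j * P j c).

Definition vmul (n : nat) (A : nat -> R) (M : nat -> nat -> R) : nat -> R :=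
  fun j => sumn n (fun r => A r * M r j).

Fixpoint prodS (a : mask) (L n : nat) (p0 : nat -> nat -> R)
         (eta : nat -> bool) (k : nat) : nat -> nat -> R :=
  match k with
  | O => p0
  | S k' => mmul n (Smat a L n (S k') (eta (S k'))) (prodS a L n p0 eta k')
  end.

Definition limit_curve (a : mask) (L n m : nat) (p0 : nat -> nat -> R)
  : (nat -> R) -> Prop :=
  fun q => exists eta : nat -> bool,
    forall r c, (r < n)%nat -> (c < m)%nat ->
      Un_cv (fun k => prodS a L n p0 eta k r c) (q c).

Definition fmap (a : mask) (L n : nat) (p0 : nat -> nat -> R)
           (k : nat) (b : bool) (A : nat -> R) : nat -> R :=
  match k with
  | S O => fun c => sumn n (fun j => vmul n A (Smat a L n 1 b) j * p0 j c)
  | _ => vmul n A (Smat a L n k b)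
  end.

Definition img (f : (nat -> R) -> (nat -> R)) (X : (nat -> R) -> Prop)
  : (nat -> R) -> Prop := fun y => exists x, X x /\ y = f x.

Definition Fset (a : mask) (L n : nat) (p0 : nat -> nat -> R) (k : nat)
           (X : (nat -> R) -> Prop) : (nat -> R) -> Prop :=
  fun y => img (fmap a L n p0 k false) X y \/ img (fmap a L n p0 k true) X y.

(* Gmid d X = F_2 o F_3 o ... o F_{d+1} (X) *)
Fixpoint Gmid (a : mask) (L n : nat) (p0 : nat -> nat -> R) (d : nat)
         (X : (nat -> R) -> Prop) : (nat -> R) -> Prop :=
  match d with
  | O => X
  | S d' => Gmid a L n p0 d' (Fset a L n p0 (S (S d')) X)
  end.

(* Fcomp k X = F_1 o F_2 o ... o F_k (X)   (for k >= 1) *)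
Definition Fcomp (a : mask) (L n : nat) (p0 : nat -> nat -> R) (k : nat)
           (X : (nat -> R) -> Prop) : (nat -> R) -> Prop :=
  Fset a L n p0 1 (Gmid a L n p0 (Nat.pred k) X).

Definition nonempty (X : (nat -> R) -> Prop) : Prop := exists x, X x.

Definition seq_compact (d : nat) (X : (nat -> R) -> Prop) : Prop :=
  forall u : nat -> (nat -> R), (forall k, X (u k)) ->
    exists (phi : nat -> nat) (x : nat -> R),
      (forall k, (phi k < phi (S k))%nat) /\ X x /\
      forall c, (c < d)%nat -> Un_cv (fun k => u (phi k) c) (x c).

Definition in_K (n : nat) (C : R) (X : (nat -> R) -> Prop) : Prop :=
  forall x, X x -> sumn n x = 1 /\ forall i, (i < n)%nat -> Rabs (x i) <= C.

Definition hausdorff_cv (d : nat) (X : nat -> (nat -> R) -> Prop)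
           (Y : (nat -> R) -> Prop) : Prop :=
  forall eps, 0 < eps -> exists N, forall k, (N <= k)%nat ->
    (forall x, X k x -> exists y, Y y /\ dist d x y < eps) /\
    (forall y, Y y -> exists x, X k x /\ dist d x y < eps).

From Pilot Require Import Defs.
From Stdlib Require Import Reals ZArith Lia Lra Psatz.
Open Scope R_scope.

(* Unwinding the definitions, the points of F_1 o ... o F_k (A) are
   exactly the row combinations  x P_{eta,k}  with x in A and an address
   eta, where P_{eta,k} = S^{[k]}_{eta k} ... S^{[1]}_{eta 1} pbar0.  The rows
   of P_{eta,k} are n consecutive level-k points of the scheme started from
   the (zero-padded) control points, sitting at dyadic parameters that move
   by O(2^{-k}) along eta.  Uniform convergence of the scheme to a continuous
   limit, together with uniform continuity on a compact interval, makes all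
   entries of P_{eta,k} converge to a common row q_eta, uniformly in eta.
   Since the coefficients of x sum to 1 and are bounded by C, the point
   x P_{eta,k} is then uniformly close to q_eta, which gives both halves of
   Hausdorff convergence. *)

Lemma sumn_ext k f g :
  (forall i, (i < k)%nat -> f i = g i) -> sumn k f = sumn k g.
Proof.
  induction k as [|k IH]; intros H; simpl; [reflexivity|].
  rewrite IH by (intros; apply H; lia). rewrite H by lia. reflexivity.
Qed.

Lemma sumn_plus k f g : sumn k (fun i => f i + g i) = sumn k f + sumn k g.
Proof. induction k as [|k IH]; simpl; [ring|]. rewrite IH; ring. Qed.

Lemma sumn_scal_l k c f : sumn k (fun i => c * f i) = c * sumn k f.
Proof. induction k as [|k IH]; simpl; [ring|]. rewrite IH; ring. Qed.

Lemma sumn_scal_r k c f : sumn k (fun i => f i * c) = sumn k f * c.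
Proof. induction k as [|k IH]; simpl; [ring|]. rewrite IH; ring. Qed.

Lemma sumn_const k c : sumn k (fun _ => c) = INR k * c.
Proof. induction k as [|k IH]; simpl sumn; [simpl; ring|]. rewrite IH, S_INR; ring. Qed.

Lemma sumn_zero k f : (forall i, (i < k)%nat -> f i = 0) -> sumn k f = 0.
Proof.
  intros H. rewrite (sumn_ext k f (fun _ => 0)) by auto.
  rewrite sumn_const; ring.
Qed.

Lemma sumn_single k f j0 :
  (j0 < k)%nat -> (forall i, (i < k)%nat -> i <> j0 -> f i = 0) -> sumn k f = f j0.
Proof.
  induction k as [|k IH]; intros Hj H; [lia|]. simpl.
  destruct (Nat.eq_dec j0 k) as [->|Hne].
  - rewrite sumn_zero by (intros; apply H; lia). ring.
  - rewrite IH, (H k) by (lia || intros; apply H; lia). ring.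
Qed.

Lemma sumn_swap a b g :
  sumn a (fun i => sumn b (fun j => g i j)) = sumn b (fun j => sumn a (fun i => g i j)).
Proof.
  induction a as [|a IH]; simpl.
  - symmetry; apply sumn_zero; auto.
  - rewrite IH, <- sumn_plus. reflexivity.
Qed.

Lemma sumn_le k f g : (forall i, (i < k)%nat -> f i <= g i) -> sumn k f <= sumn k g.
Proof.
  induction k as [|k IH]; simpl; intros H; [lra|].
  pose proof (IH (fun i Hi => H i ltac:(lia))). pose proof (H k ltac:(lia)). lra.
Qed.

Lemma sumn_abs k f : Rabs (sumn k f) <= sumn k (fun i => Rabs (f i)).
Proof.
  induction k as [|k IH]; simpl; [rewrite Rabs_R0; lra|].
  eapply Rle_trans; [apply Rabs_triang|]. lra.
Qed.

Lemma sumn_term_le k f j :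
  (forall i, (i < k)%nat -> 0 <= f i) -> (j < k)%nat -> f j <= sumn k f.
Proof.
  intros H Hj.
  assert (Hsingle : sumn k (fun i => if Nat.eqb i j then f i else 0) = f j).
  { rewrite (sumn_single _ _ j Hj), Nat.eqb_refl; [reflexivity|].
    intros i _ Hij. apply Nat.eqb_neq in Hij. now rewrite Hij. }
  rewrite <- Hsingle. apply sumn_le.
  intros i Hi. destruct (Nat.eqb i j); [lra|auto].
Qed.

Definition idmat (r j : nat) : R := if Nat.eqb r j then 1 else 0.

Lemma mmul_assoc n A B C r c :
  mmul n (mmul n A B) C r c = mmul n A (mmul n B C) r c.
Proof.
  unfold mmul.
  transitivity (sumn n (fun j => sumn n (fun i => A r i * B i j * C j c))).
  - apply sumn_ext; intros. now rewrite <- sumn_scal_r.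
  - rewrite sumn_swap. apply sumn_ext; intros. rewrite <- sumn_scal_l.
    apply sumn_ext; intros. ring.
Qed.

Lemma vmul_mmul n v M P j : vmul n (vmul n v M) P j = vmul n v (mmul n M P) j.
Proof.
  unfold vmul, mmul.
  transitivity (sumn n (fun i => sumn n (fun r => v r * M r i * P i j))).
  - apply sumn_ext; intros. now rewrite <- sumn_scal_r.
  - rewrite sumn_swap. apply sumn_ext; intros. rewrite <- sumn_scal_l.
    apply sumn_ext; intros. ring.
Qed.

Lemma vmul_ext n v w P j :
  (forall i, (i < n)%nat -> v i = w i) -> vmul n v P j = vmul n w P j.
Proof. intros H; unfold vmul; apply sumn_ext; intros; now rewrite H. Qed.

Lemma vmul_idmat n v j : (j < n)%nat -> vmul n v idmat j = v j.
Proof.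
  intros Hj; unfold vmul, idmat. rewrite (sumn_single n _ j Hj), Nat.eqb_refl; [ring|].
  intros i _ Hij. apply Nat.eqb_neq in Hij. rewrite Hij; ring.
Qed.

Lemma mmul_idmat n Q r c : (r < n)%nat -> mmul n idmat Q r c = Q r c.
Proof.
  intros Hr; unfold mmul, idmat. rewrite (sumn_single n _ r Hr), Nat.eqb_refl; [ring|].
  intros i _ Hir. apply not_eq_sym, Nat.eqb_neq in Hir. rewrite Hir; ring.
Qed.

Section SetIteration.

Variables (a : mask) (L n : nat) (p0 : nat -> nat -> R).

(* [tailprod eta d] = S^{[d+1]}_{eta (d+1)} ... S^{[2]}_{eta 2}, the factor of
   P_{eta,d+1} to the left of S^{[1]}_{eta 1} pbar0. *)
Fixpoint tailprod (eta : nat -> bool) (d : nat) : nat -> nat -> R :=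
  match d with
  | O => idmat
  | S d' => mmul n (Smat a L n (S (S d')) (eta (S (S d')))) (tailprod eta d')
  end.

Lemma tailprod_ext eta eta' d :
  (forall i, (2 <= i <= S d)%nat -> eta i = eta' i) ->
  tailprod eta d = tailprod eta' d.
Proof.
  induction d as [|d IH]; intros H; simpl; [reflexivity|].
  rewrite IH, H by (lia || intros; apply H; lia). reflexivity.
Qed.

Definition set_digit (eta : nat -> bool) (i : nat) (b : bool) : nat -> bool :=
  fun j => if Nat.eqb j i then b else eta j.

Lemma set_digit_other eta i b j : j <> i -> set_digit eta i b j = eta j.
Proof. intros H. unfold set_digit. now apply Nat.eqb_neq in H as ->. Qed.

Lemma Fset_elim k X y :
  Fset a L n p0 k X y -> exists b A, X A /\ y = fmap a L n p0 k b A.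
Proof. intros [[A [HA E]]|[A [HA E]]]; eauto. Qed.

Lemma Fset_intro k X A b : X A -> Fset a L n p0 k X (fmap a L n p0 k b A).
Proof. intros H; destruct b; [right|left]; exists A; auto. Qed.

Lemma Gmid_elim d : forall X v, Gmid a L n p0 d X v ->
  exists A eta, X A /\ forall j, (j < n)%nat -> v j = vmul n A (tailprod eta d) j.
Proof.
  induction d as [|d IH]; intros X v H; simpl in H.
  - exists v, (fun _ => false). split; [assumption|]. intros j Hj. now rewrite vmul_idmat.
  - destruct (IH _ _ H) as [A' [eta [HA' Hv]]].
    destruct (Fset_elim _ _ _ HA') as [b [A [HA ->]]].
    exists A, (set_digit eta (S (S d)) b). split; [assumption|]. intros j Hj.
    rewrite Hv by assumption. simpl fmap. rewrite vmul_mmul. simpl tailprod.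
    unfold set_digit at 1. rewrite Nat.eqb_refl.
    rewrite (tailprod_ext (set_digit eta (S (S d)) b) eta); [reflexivity|].
    intros i Hi. apply set_digit_other. lia.
Qed.

Lemma Gmid_intro d : forall X A eta, X A -> exists v, Gmid a L n p0 d X v /\
  forall j, (j < n)%nat -> v j = vmul n A (tailprod eta d) j.
Proof.
  induction d as [|d IH]; intros X A eta HA.
  - exists A. split; [assumption|]. intros j Hj. now rewrite vmul_idmat.
  - destruct (IH (Fset a L n p0 (S (S d)) X)
                 (fmap a L n p0 (S (S d)) (eta (S (S d))) A) eta) as [v [Hv Hvj]].
    { now apply Fset_intro. }
    exists v. split; [assumption|]. intros j Hj. rewrite Hvj by assumption.
    simpl fmap. now rewrite vmul_mmul.
Qed.

Lemma prodS_tailprod eta d r c : (r < n)%nat ->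
  prodS a L n p0 eta (S d) r c =
  mmul n (tailprod eta d) (mmul n (Smat a L n 1 (eta 1%nat)) p0) r c.
Proof.
  revert r. induction d as [|d IH]; intros r Hr.
  - simpl tailprod. now rewrite mmul_idmat.
  - change (prodS a L n p0 eta (S (S d)) r c) with
      (mmul n (Smat a L n (S (S d)) (eta (S (S d)))) (prodS a L n p0 eta (S d)) r c).
    simpl tailprod. rewrite mmul_assoc. unfold mmul at 1 3.
    apply sumn_ext; intros j Hj. now rewrite IH.
Qed.

Lemma fmap1_tailprod eta k v A b :
  (forall j, (j < n)%nat -> v j = vmul n A (tailprod eta k) j) ->
  b = eta 1%nat ->
  forall c, fmap a L n p0 1 b v c = vmul n A (prodS a L n p0 eta (S k)) c.
Proof.
  intros Hv -> c.
  change (fmap a L n p0 1 (eta 1%nat) v c)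
    with (vmul n (vmul n v (Smat a L n 1 (eta 1%nat))) p0 c).
  rewrite vmul_mmul, (vmul_ext n v (vmul n A (tailprod eta k))) by assumption.
  rewrite vmul_mmul. unfold vmul. apply sumn_ext; intros s Hs.
  now rewrite prodS_tailprod.
Qed.

Lemma Fcomp_elim k X x : Fcomp a L n p0 (S k) X x ->
  exists A eta, X A /\ forall c, x c = vmul n A (prodS a L n p0 eta (S k)) c.
Proof.
  unfold Fcomp; simpl Nat.pred. intros H.
  destruct (Fset_elim _ _ _ H) as [b [v [Hv ->]]].
  destruct (Gmid_elim _ _ _ Hv) as [A [eta [HA Hvj]]].
  exists A, (set_digit eta 1 b). split; [assumption|].
  apply fmap1_tailprod; [|unfold set_digit; reflexivity].
  intros j Hj. rewrite Hvj by assumption. f_equal.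
  apply tailprod_ext. intros i Hi. symmetry. apply set_digit_other. lia.
Qed.

Lemma Fcomp_intro k X A eta : X A ->
  exists x, Fcomp a L n p0 (S k) X x /\
    forall c, x c = vmul n A (prodS a L n p0 eta (S k)) c.
Proof.
  intros HA. destruct (Gmid_intro k X A eta HA) as [v [Hv Hvj]].
  exists (fmap a L n p0 1 (eta 1%nat) v). split.
  - unfold Fcomp; simpl Nat.pred. now apply Fset_intro.
  - now apply fmap1_tailprod.
Qed.

End SetIteration.

(* The rows of P_{eta,k} are n consecutive points of the level-k polygon of
   the scheme started from the data [column_data] (pbar0 padded by zeros),
   beginning at the index [window eta k]. *)

Section Windows.

Variables (a : mask) (L n : nat).
Hypothesis Hsupp : forall k j, (j < 0 \/ Z.of_nat L < j)%Z -> a k j = 0.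
Hypothesis HL : (S L < n)%nat.

Definition block_offset (b : bool) : Z := if b then Z.of_nat n else (Z.of_nat L - 1)%Z.

(* Index of the first refined point selected by the address [eta] at level k. *)
Fixpoint window (eta : nat -> bool) (k : nat) : Z :=
  match k with
  | O => 0%Z
  | S k' => (2 * window eta k' + block_offset (eta (S k')))%Z
  end.

Definition column_data (p0 : nat -> nat -> R) (c : nat) : Z -> R :=
  fun i => if andb (Z.leb 0 i) (Z.ltb i (Z.of_nat n)) then p0 (Z.to_nat i) c else 0.

Lemma refine_term_as_window_sum k g Wz e t :
  (Z.of_nat L - 1 <= e <= 2 * Z.of_nat n - 1)%Z -> (t < S L)%nat ->
  (if Z.even (2 * Wz + e - Z.of_nat t)%Z
   then a k (Z.of_nat t) * g ((2 * Wz + e - Z.of_nat t) / 2)%Z else 0) =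
  sumn n (fun j => if Z.eq_dec (Z.of_nat t) (e - 2 * Z.of_nat j)%Z
                   then a k (Z.of_nat t) * g (Wz + Z.of_nat j)%Z else 0).
Proof.
  intros He Ht.
  destruct (Z.even (2 * Wz + e - Z.of_nat t)%Z) eqn:Ev.
  - apply Z.even_spec in Ev as [h Hh].
    rewrite (sumn_single n _ (Z.to_nat (h - Wz))); [| lia |].
    + rewrite Z2Nat.id by lia. destruct (Z.eq_dec _ _) as [_|]; [|lia].
      rewrite Hh, Z.mul_comm, Z.div_mul by lia. do 2 f_equal. lia.
    + intros j _ Hj. destruct (Z.eq_dec _ _); [lia|ring].
  - symmetry. apply sumn_zero. intros j _. destruct (Z.eq_dec _ _) as [E|]; [|ring].
    exfalso. rewrite <- Bool.not_true_iff_false in Ev. apply Ev, Z.even_spec.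
    exists (Wz + Z.of_nat j)%Z. lia.
Qed.

Lemma support_sum k e j y :
  sumn (S L) (fun t => if Z.eq_dec (Z.of_nat t) (e - 2 * Z.of_nat j)%Z
                      then a k (Z.of_nat t) * y else 0) =
  a k (e - 2 * Z.of_nat j)%Z * y.
Proof.
  destruct (Z_le_dec 0 (e - 2 * Z.of_nat j)%Z) as [H0|H0];
  [destruct (Z_le_dec (e - 2 * Z.of_nat j)%Z (Z.of_nat L)) as [H1|H1]|].
  - rewrite (sumn_single (S L) _ (Z.to_nat (e - 2 * Z.of_nat j))); [| lia |].
    + rewrite Z2Nat.id by lia. destruct (Z.eq_dec _ _); [reflexivity|lia].
    + intros i _ Hi. destruct (Z.eq_dec _ _); [lia|ring].
  - rewrite Hsupp, Rmult_0_l by lia. apply sumn_zero. intros i Hi. destruct (Z.eq_dec _ _); [lia|ring].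
  - rewrite Hsupp, Rmult_0_l by lia. apply sumn_zero. intros i Hi. destruct (Z.eq_dec _ _); [lia|ring].
Qed.

Lemma refine_window k g Wz e :
  (Z.of_nat L - 1 <= e <= 2 * Z.of_nat n - 1)%Z ->
  refine a L k g (2 * Wz + e)%Z =
  sumn n (fun j => a k (e - 2 * Z.of_nat j)%Z * g (Wz + Z.of_nat j)%Z).
Proof.
  intros He. unfold refine.
  rewrite (sumn_ext _ _ _ (fun t Ht => refine_term_as_window_sum k g Wz e t He Ht)).
  rewrite sumn_swap.
  apply sumn_ext. intros j _. apply support_sum.
Qed.

Lemma prodS_level p0 eta c k r : (r < n)%nat ->
  prodS a L n p0 eta k r c =
  level a L (column_data p0 c) k (window eta k + Z.of_nat r)%Z.
Proof.
  revert r. induction k as [|k IH]; intros r Hr.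
  - simpl. unfold column_data. rewrite Nat2Z.id.
    replace (Z.leb 0 (Z.of_nat r) && Z.ltb (Z.of_nat r) (Z.of_nat n))%bool with true;
      [reflexivity|].
    symmetry; apply Bool.andb_true_iff; split; [apply Z.leb_le|apply Z.ltb_lt]; lia.
  - change (level a L (column_data p0 c) (S k) (window eta (S k) + Z.of_nat r)%Z)
      with (refine a L k (level a L (column_data p0 c) k)
              (2 * window eta k + block_offset (eta (S k)) + Z.of_nat r)%Z).
    replace (2 * window eta k + block_offset (eta (S k)) + Z.of_nat r)%Z
      with (2 * window eta k + (block_offset (eta (S k)) + Z.of_nat r))%Z by lia.
    rewrite refine_window by (unfold block_offset; destruct (eta (S k)); lia).
    simpl prodS. unfold mmul. apply sumn_ext; intros j Hj. rewrite IH by assumption.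
    reflexivity.
Qed.

End Windows.

Lemma Rabs_le_bounds x y : Rabs x <= y -> - y <= x <= y.
Proof. pose proof (Rle_abs x). pose proof (Rle_abs (- x)). rewrite Rabs_Ropp in *. lra. Qed.

Section DyadicPositions.

Variables (L n : nat).
Hypothesis HL : (S L < n)%nat.

Definition param (eta : nat -> bool) (k r : nat) : R :=
  IZR (window L n eta k + Z.of_nat r) / 2 ^ k.

Definition window_param (eta : nat -> bool) (k : nat) : R :=
  IZR (window L n eta k) / 2 ^ k.

Lemma pow2_pos k : 0 < 2 ^ k.
Proof. apply pow_lt; lra. Qed.

Lemma inv_pow2_pos k : 0 < / 2 ^ k.
Proof. apply Rinv_0_lt_compat, pow2_pos. Qed.

Lemma inv_pow2_antitone k d : / 2 ^ (k + d) <= / 2 ^ k.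
Proof. apply Rinv_le_contravar; [apply pow2_pos|]. apply Rle_pow; [lra|lia]. Qed.

Lemma inv_pow2_le1 k : / 2 ^ k <= 1.
Proof. rewrite <- Rinv_1. apply Rinv_le_contravar; [lra|]. apply pow_R1_Rle; lra. Qed.

Lemma block_offset_bound b : Rabs (IZR (block_offset L n b)) <= INR n.
Proof.
  assert (- Z.of_nat n <= block_offset L n b <= Z.of_nat n)%Z
    by (unfold block_offset; destruct b; lia).
  rewrite INR_IZR_INZ. apply Rabs_le. rewrite <- opp_IZR. split; apply IZR_le; lia.
Qed.

Lemma window_param_S eta k :
  window_param eta (S k) =
  window_param eta k + IZR (block_offset L n (eta (S k))) * (/ 2 ^ k * / 2).
Proof.
  unfold window_param.
  change (window L n eta (S k))
    with (2 * window L n eta k + block_offset L n (eta (S k)))%Z.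
  rewrite plus_IZR, mult_IZR. simpl pow.
  field. apply Rgt_not_eq, pow2_pos.
Qed.

Lemma window_param_drift eta d k :
  Rabs (window_param eta (k + d) - window_param eta k) <= INR n * (/ 2 ^ k - / 2 ^ (k + d)).
Proof.
  induction d as [|d IH].
  - rewrite Nat.add_0_r, Rminus_diag, Rabs_R0. lra.
  - rewrite Nat.add_succ_r, window_param_S.
    replace (/ 2 ^ S (k + d)) with (/ 2 ^ (k + d) * / 2) by (simpl pow; rewrite Rinv_mult; ring).
    pose proof (block_offset_bound (eta (S (k + d)))) as Hoff.
    pose proof (inv_pow2_pos (k + d)) as Hpos.
    set (u := / 2 ^ (k + d)) in *. set (o := IZR (block_offset L n (eta (S (k + d))))) in *.
    replace (window_param eta (k + d) + o * (u * / 2) - window_param eta k)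
      with ((window_param eta (k + d) - window_param eta k) + o * (u * / 2)) by ring.
    eapply Rle_trans; [apply Rabs_triang|].
    rewrite Rabs_mult, (Rabs_right (u * / 2)) by lra.
    assert (Rabs o * (u * / 2) <= INR n * (u * / 2)) by (apply Rmult_le_compat_r; lra).
    lra.
Qed.

Lemma window_param_bound eta k : Rabs (window_param eta k) <= INR n.
Proof.
  pose proof (window_param_drift eta k 0) as H. simpl in H.
  unfold window_param at 2 in H. simpl in H. rewrite Rdiv_0_l, Rminus_0_r in H.
  pose proof (inv_pow2_pos k). pose proof (pos_INR n). nra.
Qed.

Lemma param_split eta k r : param eta k r = window_param eta k + INR r * / 2 ^ k.
Proof. unfold param, window_param, Rdiv. rewrite plus_IZR, <- INR_IZR_INZ. ring. Qed.

Lemma row_shift_bound k r : (r < n)%nat -> 0 <= INR r * / 2 ^ k <= INR n * / 2 ^ k.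
Proof.
  intros Hr. pose proof (inv_pow2_pos k). apply lt_INR in Hr. pose proof (pos_INR r).
  split; [apply Rmult_le_pos|apply Rmult_le_compat_r]; lra.
Qed.

Lemma param_bound eta k r : (r < n)%nat -> Rabs (param eta k r) <= 2 * INR n.
Proof.
  intros Hr. rewrite param_split. pose proof (window_param_bound eta k).
  pose proof (row_shift_bound k r Hr). pose proof (inv_pow2_le1 k). pose proof (pos_INR n).
  eapply Rle_trans; [apply Rabs_triang|]. rewrite (Rabs_right (INR r * / 2 ^ k)) by lra.
  nra.
Qed.

Lemma param_close eta k d r r' : (r < n)%nat -> (r' < n)%nat ->
  Rabs (param eta k r - param eta (k + d) r') <= 3 * INR n * / 2 ^ k.
Proof.
  intros Hr Hr'. rewrite !param_split.
  pose proof (window_param_drift eta d k). pose proof (row_shift_bound k r Hr).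
  pose proof (row_shift_bound (k + d) r' Hr'). pose proof (inv_pow2_antitone k d).
  pose proof (inv_pow2_pos (k + d)). pose proof (pos_INR n).
  assert (INR n * / 2 ^ (k + d) <= INR n * / 2 ^ k) by (apply Rmult_le_compat_l; lra).
  apply Rabs_le. apply Rabs_le_bounds in H. split; nra.
Qed.

End DyadicPositions.

Lemma inv_pow2_small e : 0 < e -> exists N, forall k, (N <= k)%nat -> / 2 ^ k < e.
Proof.
  intros He. assert (Hhalf : Rabs (/ 2) < 1) by (rewrite Rabs_right; lra).
  destruct (pow_lt_1_zero _ Hhalf _ He) as [N HN]. exists N. intros k Hk.
  specialize (HN k Hk). rewrite pow_inv, Rabs_right in HN; [exact HN|].
  apply Rle_ge, Rlt_le, inv_pow2_pos.
Qed.

Lemma level_uniformly_close a L p f M :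
  continuity f -> limit_of a L p f ->
  forall eps, 0 < eps -> exists N delta, 0 < delta /\
    forall k k' i i', (N <= k)%nat -> (N <= k')%nat ->
      Rabs (IZR i / 2 ^ k) <= M -> Rabs (IZR i' / 2 ^ k') <= M ->
      Rabs (IZR i / 2 ^ k - IZR i' / 2 ^ k') < delta ->
      Rabs (level a L p k i - level a L p k' i') < eps.
Proof.
  intros Hf Hlim eps Heps.
  assert (He3 : 0 < eps / 3) by lra.
  destruct (Heine f (fun x => - M <= x <= M) (compact_P3 _ _) (fun x _ => Hf x)
              (mkposreal _ He3)) as [delta Hdelta].
  destruct (Hlim _ He3) as [N HN].
  exists N, delta. split; [apply cond_pos|].
  intros k k' i i' Hk Hk' Hs Hs' Hss.
  pose proof (HN k i Hk). pose proof (HN k' i' Hk').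
  pose proof (Hdelta _ _ (Rabs_le_bounds _ _ Hs) (Rabs_le_bounds _ _ Hs') Hss). simpl in *.
  set (s := IZR i / 2 ^ k) in *. set (s' := IZR i' / 2 ^ k') in *.
  replace (level a L p k i - level a L p k' i')
    with ((level a L p k i - f s) + (f s - f s') - (level a L p k' i' - f s')) by ring.
  unfold Rminus at 1. eapply Rle_lt_trans; [apply Rabs_triang|].
  rewrite Rabs_Ropp. pose proof (Rabs_triang (level a L p k i - f s) (f s - f s')). lra.
Qed.

Lemma eventually_all_below m (Q : nat -> nat -> Prop) :
  (forall c, (c < m)%nat -> exists N, Q c N) ->
  (forall c N N', (N <= N')%nat -> Q c N -> Q c N') ->
  exists N, forall c, (c < m)%nat -> Q c N.
Proof.
  intros H Hmono. induction m as [|m IH].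
  - exists 0%nat; intros; lia.
  - destruct IH as [N1 HN1]; [intros; apply H; lia|].
    destruct (H m ltac:(lia)) as [N2 HN2]. exists (Nat.max N1 N2). intros c Hc.
    destruct (Nat.eq_dec c m) as [->|Hne].
    + apply (Hmono _ N2); [lia|assumption].
    + apply (Hmono _ N1); [lia|]. apply HN1; lia.
Qed.

Section EntryConvergence.

Variables (a : mask) (L n m : nat) (p0 : nat -> nat -> R).
Hypothesis Hsupp : forall k j, (j < 0 \/ Z.of_nat L < j)%Z -> a k j = 0.
Hypothesis HL : (S L < n)%nat.
Hypothesis Hconv : C0_convergent a L.

Lemma column_data_bounded c : bounded_data (column_data n p0 c).
Proof.
  exists (sumn n (fun j => Rabs (p0 j c))). intros i. unfold column_data.
  destruct (Z.leb 0 i && Z.ltb i (Z.of_nat n))%bool eqn:E.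
  - apply Bool.andb_true_iff in E as [E1 E2].
    apply Z.leb_le in E1. apply Z.ltb_lt in E2.
    apply (sumn_term_le n (fun j => Rabs (p0 j c))); [intros; apply Rabs_pos|lia].
  - rewrite Rabs_R0, <- (sumn_zero n (fun _ => 0)) by auto.
    apply sumn_le; intros; apply Rabs_pos.
Qed.

Lemma entries_uniformly_cauchy eps : 0 < eps -> exists N,
  forall c eta k d r r', (c < m)%nat -> (N <= k)%nat -> (r < n)%nat -> (r' < n)%nat ->
    Rabs (prodS a L n p0 eta k r c - prodS a L n p0 eta (k + d) r' c) < eps.
Proof.
  intros Heps.
  destruct (eventually_all_below m (fun c N => forall eta k d r r',
     (N <= k)%nat -> (r < n)%nat -> (r' < n)%nat ->
     Rabs (prodS a L n p0 eta k r c - prodS a L n p0 eta (k + d) r' c) < eps))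
    as [N HN]; [| intros c N N' HNN' HQ eta k d r r' Hk; apply HQ; lia |].
  - intros c _.
    destruct (proj1 Hconv _ (column_data_bounded c)) as [f [Hf Hlim]].
    destruct (level_uniformly_close _ _ _ _ (2 * INR n) Hf Hlim eps Heps)
      as [N1 [delta [Hdelta Hclose]]].
    pose proof (pos_INR n).
    destruct (inv_pow2_small (delta / (3 * INR n + 1))) as [N2 HN2].
    { apply Rdiv_lt_0_compat; lra. }
    exists (Nat.max N1 N2). intros eta k d r r' Hk Hr Hr'.
    rewrite !(prodS_level a L n Hsupp HL) by assumption.
    apply Hclose; try lia; try (apply (param_bound L n HL); assumption).
    specialize (HN2 k ltac:(lia)). pose proof (inv_pow2_pos k).
    eapply Rle_lt_trans; [apply (param_close L n HL eta k d r r' Hr Hr')|].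
    apply (Rmult_lt_compat_l (3 * INR n + 1)) in HN2; [|lra].
    replace ((3 * INR n + 1) * (delta / (3 * INR n + 1))) with delta in HN2
      by (field; lra).
    nra.
  - exists N. intros c eta k d r r' Hc. apply HN, Hc.
Qed.

Lemma first_row_cauchy eta c : (c < m)%nat ->
  Cauchy_crit (fun k => prodS a L n p0 eta k 0 c).
Proof.
  intros Hc e He. destruct (entries_uniformly_cauchy e He) as [N HN].
  exists N. intros k1 k2 H1 H2. unfold Rdist.
  destruct (Nat.le_ge_cases k1 k2) as [Hle|Hle].
  - replace k2 with (k1 + (k2 - k1))%nat by lia. apply HN; lia.
  - replace k1 with (k2 + (k1 - k2))%nat by lia. rewrite Rabs_minus_sym. apply HN; lia.
Qed.

(* q_eta: the limit of the first row (coordinates c >= m are irrelevant). *)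
Definition limit_point (eta : nat -> bool) (c : nat) : R :=
  match lt_dec c m with
  | left Hc => proj1_sig (R_complete _ (first_row_cauchy eta c Hc))
  | right _ => 0
  end.

Lemma rows_converge eta r c : (r < n)%nat -> (c < m)%nat ->
  Un_cv (fun k => prodS a L n p0 eta k r c) (limit_point eta c).
Proof.
  intros Hr Hc e He. unfold limit_point. destruct (lt_dec c m) as [Hc'|]; [|lia].
  destruct (R_complete _ (first_row_cauchy eta c Hc')) as [l Hl]. simpl.
  destruct (Hl (e / 2) ltac:(lra)) as [N0 HN0].
  destruct (entries_uniformly_cauchy (e / 2) ltac:(lra)) as [N1 HN1].
  exists (Nat.max N0 N1). intros k Hk. unfold Rdist in *.
  specialize (HN0 k ltac:(lia)).
  specialize (HN1 c eta k 0%nat r 0%nat Hc ltac:(lia) Hr ltac:(lia)).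
  rewrite Nat.add_0_r in HN1.
  pose proof (Rabs_triang (prodS a L n p0 eta k r c - prodS a L n p0 eta k 0 c)
                          (prodS a L n p0 eta k 0 c - l)).
  replace (prodS a L n p0 eta k r c - prodS a L n p0 eta k 0 c
           + (prodS a L n p0 eta k 0 c - l)) with (prodS a L n p0 eta k r c - l) in *
    by ring.
  lra.
Qed.

End EntryConvergence.

Lemma limit_le u l x d N :
  Un_cv u l -> (forall k, (N <= k)%nat -> Rabs (x - u k) <= d) -> Rabs (x - l) <= d.
Proof.
  intros Hu H. destruct (Rle_or_lt (Rabs (x - l)) d) as [|Hlt]; [assumption|].
  destruct (Hu (Rabs (x - l) - d)) as [N' HN']; [lra|].
  specialize (HN' (Nat.max N N') ltac:(lia)). specialize (H (Nat.max N N') ltac:(lia)).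
  unfold Rdist in HN'.
  pose proof (Rabs_triang (x - u (Nat.max N N')) (u (Nat.max N N') - l)).
  replace (x - u (Nat.max N N') + (u (Nat.max N N') - l)) with (x - l) in * by ring.
  lra.
Qed.

Lemma dist_lt_of_coords m x y eps : 0 < eps ->
  (forall c, (c < m)%nat -> Rabs (x c - y c) <= eps / (INR m + 1)) -> Defs.dist m x y < eps.
Proof.
  intros He H. pose proof (pos_INR m). set (d := eps / (INR m + 1)) in *.
  assert (Hd : d * (INR m + 1) = eps) by (unfold d; field; lra).
  assert (0 < d) by (unfold d; apply Rdiv_lt_0_compat; lra).
  assert (Hsum : sumn m (fun c => (x c - y c) ^ 2) < eps ^ 2).
  { apply Rle_lt_trans with (sumn m (fun _ => d ^ 2)).
    - apply sumn_le; intros c Hc. pose proof (Rabs_le_bounds _ _ (H c Hc)). nra.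
    - rewrite sumn_const, <- Hd. nra. }
  unfold Defs.dist. rewrite <- (sqrt_pow2 eps) by lra.
  apply sqrt_lt_1_alt. split; [|assumption].
  rewrite <- (sumn_zero m (fun _ => 0)) by auto. apply sumn_le. intros; apply pow2_ge_0.
Qed.

Lemma affine_comb_close n A C P y d :
  sumn n A = 1 -> (forall i, (i < n)%nat -> Rabs (A i) <= C) ->
  (forall r, (r < n)%nat -> Rabs (P r - y) <= d) -> 0 <= d ->
  Rabs (sumn n (fun r => A r * P r) - y) <= INR n * C * d.
Proof.
  intros Hsum HA HP Hd.
  replace (sumn n (fun r => A r * P r) - y) with (sumn n (fun r => A r * (P r - y))).
  - eapply Rle_trans; [apply sumn_abs|].
    apply Rle_trans with (sumn n (fun _ => C * d)).
    + apply sumn_le; intros i Hi. rewrite Rabs_mult.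
      apply Rmult_le_compat; auto using Rabs_pos.
    + rewrite sumn_const. lra.
  - transitivity (sumn n (fun r => A r * P r + (- y) * A r)).
    + apply sumn_ext; intros; ring.
    + rewrite sumn_plus, sumn_scal_l, Hsum. ring.
Qed.

Lemma points_near_limit a L n m p0 C X :
  (forall k j, (j < 0 \/ Z.of_nat L < j)%Z -> a k j = 0) -> (S L < n)%nat ->
  C0_convergent a L -> 0 < C -> in_K n C X ->
  forall eps, 0 < eps -> exists N, forall k eta q A x, (N <= k)%nat ->
    (forall r c, (r < n)%nat -> (c < m)%nat ->
       Un_cv (fun k => prodS a L n p0 eta k r c) (q c)) ->
    X A -> (forall c, x c = vmul n A (prodS a L n p0 eta k) c) ->
    Defs.dist m x q < eps.
Proof.
  intros Hsupp HL Hconv HC HK eps Heps.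
  pose proof (pos_INR m). pose proof (pos_INR n).
  set (e1 := eps / (INR m + 1)). set (e2 := e1 / (INR n * C + 1)).
  assert (HnC : 0 <= INR n * C) by (apply Rmult_le_pos; lra).
  assert (He1 : 0 < e1) by (unfold e1; apply Rdiv_lt_0_compat; lra).
  assert (He2 : 0 < e2) by (unfold e2; apply Rdiv_lt_0_compat; lra).
  assert (He12 : INR n * C * e2 <= e1).
  { unfold e2. apply Rmult_le_reg_r with (INR n * C + 1); [lra|].
    replace (INR n * C * (e1 / (INR n * C + 1)) * (INR n * C + 1))
      with (INR n * C * e1) by (field; lra).
    nra. }
  destruct (entries_uniformly_cauchy a L n m p0 Hsupp HL Hconv e2 He2) as [N HN].
  exists N. intros k eta q A x Hk Hq HA Hx. destruct (HK A HA) as [HA1 HA2].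
  apply dist_lt_of_coords; [assumption|]. intros c Hc. rewrite Hx.
  eapply Rle_trans; [|exact He12]. unfold vmul.
  apply affine_comb_close; [assumption|assumption| |lra]. intros r Hr.
  apply (limit_le _ _ _ _ k (Hq r c Hr Hc)).
  intros k' Hk'. replace k' with (k + (k' - k))%nat by lia.
  apply Rlt_le, HN; lia.
Qed.

(* Each point of F_1 o ... o F_k (A) is near the limit point of its address,
   and each limit point q_eta is near the image of a fixed point of A along eta. *)
Theorem mainTheorem10
  (n m L : nat) (a : mask) (p0 : nat -> nat -> R)
  (Hsupp : forall k j, (j < 0 \/ Z.of_nat L < j)%Z -> a k j = 0)
  (HL : (S L < n)%nat)
  (Hconv : C0_convergent a L) :
  forall (C : R) (Aset : (nat -> R) -> Prop),
    0 < C -> nonempty Aset -> seq_compact n Aset -> in_K n C Aset ->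
    hausdorff_cv m (fun k => Fcomp a L n p0 k Aset) (limit_curve a L n m p0).
Proof.
  intros C Aset HC [A0 HA0] _ HK eps Heps.
  destruct (points_near_limit a L n m p0 C Aset Hsupp HL Hconv HC HK eps Heps) as [N HN].
  exists (S N). intros [|k] Hk; [lia|]. split.
  - intros x Hx. destruct (Fcomp_elim a L n p0 k Aset x Hx) as [A [eta [HA Hxe]]].
    exists (limit_point a L n m p0 Hsupp HL Hconv eta). split.
    + exists eta. intros r c Hr Hc. now apply rows_converge.
    + apply (HN (S k) eta _ A); [lia| |assumption|assumption].
      intros r c Hr Hc. now apply rows_converge.
  - intros y [eta Hy].
    destruct (Fcomp_intro a L n p0 k Aset A0 eta HA0) as [x [Hx Hxe]].
    exists x. split; [assumption|].
    apply (HN (S k) eta y A0); [lia|assumption|assumption|assumption].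
Qed.
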